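(* Let $p\ge 7$ be a prime. Then $$\sum_{1\le i<j<k\le p-1}\frac{1}{i^2jk}\equiv \sum_{1\le i<j<k\le p-1}\frac{1}{ijk^2}\equiv -\frac{1}{2}\sum_{1\le i<j<k\le p-1}\frac{1}{ij^2k}\pmod{p}.$$
   Context: Sums are over integers $i,j,k$. Congruences modulo $p$ are taken in the ring of rationals with denominators not divisible by $p$. *)

From HB Require Import structures.
From mathcomp Require Import all_boot all_order all_algebra.
Set Implicit Arguments. Unset Strict Implicit. Unset Printing Implicit Defensive.
Import Order.TTheory GRing.Theory Num.Theory.
Local Open Scope ring_scope.

(* Congruence modulo p in the ring Z_(p) of rationals whose denominator is not
   divisible by p:  a == b (mod p)  iff  a - b = p * r  with r in Z_(p). *)
Definition ratcong (p : nat) (a b : rat) : Prop :=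
  exists r : rat, ~~ (p %| `|denq r|)%N /\ a - b = p%:R * r.

Definition S3 (p : nat) (f : nat -> nat -> nat -> rat) : rat :=
  \sum_(1 <= i < p) \sum_(i.+1 <= j < p) \sum_(j.+1 <= k < p) f i j k.

From HB Require Import structures.
From mathcomp Require Import all_boot all_order all_algebra.
From mathcomp Require Import ring zify.
Set Implicit Arguments. Unset Strict Implicit. Unset Printing Implicit Defensive.
Import Order.TTheory GRing.Theory Num.Theory.
Local Open Scope ring_scope.

(* Write A, B, C for the three sums of 1/(i^2 j k), 1/(i j k^2), 1/(i j^2 k)
   over 1 <= i < j < k <= p-1.  Every term is p-integral, so the reduction map
   red : Z_(p) -> F_p is a ring morphism on these sums, and two p-integral
   rationals are congruent mod p as soon as their reductions agree.  Setting
   x_i = i^-1 in F_p, it is therefore enough to prove two identities in F_p: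
   - the reflection i |-> p - i sends x_i to -x_i and reverses the order
     i < j < k, so it exchanges the sums of x_i^2 x_j x_k and x_i x_j x_k^2:
     red A = red B;
   - over any commutative ring, 2(A + B + C) is a polynomial in the power sums
     P_m = sum_i x_i^m (m <= 4), and these power sums vanish in F_p for p >= 7
     since P_m = sum_{y != 0} y^-m; hence A + B + C = 0 in F_p, i.e.
     2 red B + red C = 0.
   The file develops triple sums over a commutative ring, the vanishing power
   sums of F_p, the reduction map, and then derives the theorem. *)

Section TripleSums.
Variable R : comNzRingType.

Definition S3R (N : nat) (f : nat -> nat -> nat -> R) : R :=
  \sum_(1 <= i < N) \sum_(i.+1 <= j < N) \sum_(j.+1 <= k < N) f i j k.

Lemma eq_S3R N f g :
  (forall i j k, (0 < i)%N -> (i < j)%N -> (j < k)%N -> (k < N)%N -> f i j k = g i j k) ->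
  S3R N f = S3R N g.
Proof.
move=> efg; apply: eq_big_nat => i /andP[i0 _]; apply: eq_big_nat => j /andP[ij _].
by apply: eq_big_nat => k /andP[jk kN]; apply: efg.
Qed.

Lemma S3R_add N f g :
  S3R N (fun i j k => f i j k + g i j k) = S3R N f + S3R N g.
Proof.
rewrite /S3R -big_split; apply: eq_bigr => i _; rewrite -big_split.
by apply: eq_bigr => j _; rewrite -big_split.
Qed.

Lemma S3R_triple N f : S3R N f =
  \sum_(t : 'I_N * ('I_N * 'I_N) | (0 < t.1)%N && ((t.1 < t.2.1)%N && (t.2.1 < t.2.2)%N))
     f t.1 t.2.1 t.2.2.
Proof.
rewrite /S3R big_geq_mkord.
under eq_bigr => i _ do rewrite big_geq_mkord.
under eq_bigr => i _ do under eq_bigr => j _ do rewrite big_geq_mkord.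
under eq_bigr => i _ do rewrite (pair_big_dep (fun j : 'I_N => (i < j)%N)
  (fun j (k : 'I_N) => (j < k)%N) (fun j k => f i j k)).
by rewrite (pair_big_dep (fun i : 'I_N => (0 < i)%N)).
Qed.

Lemma reflect_ord_proof N (i : 'I_N) :
  ((if nat_of_ord i == 0%N then 0 else N - i) < N)%N.
Proof. by case: eqP => [_|]; have := ltn_ord i; lia. Qed.

Definition reflect_ord N (i : 'I_N) : 'I_N := Ordinal (reflect_ord_proof i).

Lemma reflect_ordK N : involutive (@reflect_ord N).
Proof.
move=> i; apply: val_inj => /=; have := ltn_ord i.
by case: (eqVneq (nat_of_ord i) 0%N) => [->|i0] //= iN; case: eqP; lia.
Qed.

Lemma S3R_reflect N f :
  S3R N f = S3R N (fun i j k => f (N - k)%N (N - j)%N (N - i)%N).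
Proof.
rewrite !S3R_triple.
pose h (t : 'I_N * ('I_N * 'I_N)) := (reflect_ord t.2.2, (reflect_ord t.2.1, reflect_ord t.1)).
have hK : involutive h by move=> [a [b c]]; rewrite /h /= !reflect_ordK.
rewrite (reindex_inj (inv_inj hK)); apply: eq_big => [[a [b c]]|[a [b c]]] /=.
  have := ltn_ord a; have := ltn_ord b; have := ltn_ord c.
  by case: ifP => /eqP ?; case: ifP => /eqP ?; case: ifP => /eqP ?; lia.
by case: ifP => /eqP ?; case: ifP => /eqP ?; case: ifP => /eqP ? /and3P[? ? ?]; congr f; lia.
Qed.

Lemma sum2_recr m n (F : nat -> nat -> R) : (m <= n)%N ->
  \sum_(m <= i < n.+1) \sum_(i.+1 <= j < n.+1) F i j =
  \sum_(m <= i < n) \sum_(i.+1 <= j < n) F i j + \sum_(m <= i < n) F i n.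
Proof.
move=> mn; rewrite big_nat_recr //= [\sum_(n.+1 <= j < n.+1) _]big_geq // addr0.
by rewrite -big_split; apply: eq_big_nat => i /andP[_ hi]; rewrite big_nat_recr.
Qed.

Lemma S3R_recr n f : (1 <= n)%N ->
  S3R n.+1 f = S3R n f + \sum_(1 <= i < n) \sum_(i.+1 <= j < n) f i j n.
Proof.
move=> n1; rewrite /S3R big_nat_recr //= [\sum_(n.+1 <= j < n.+1) _]big_geq // addr0.
by rewrite -big_split; apply: eq_big_nat => i /andP[_ hi]; rewrite sum2_recr.
Qed.

Variable x : nat -> R.

Definition Pw N m := \sum_(1 <= i < N) x i ^+ m.
Definition E2 N := \sum_(1 <= i < N) \sum_(i.+1 <= j < N) x i * x j.
Definition Q2 N := \sum_(1 <= i < N) \sum_(i.+1 <= j < N) (x i ^+ 2 * x j + x i * x j ^+ 2).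
Definition T3 N :=
  S3R N (fun i j k => x i ^+ 2 * x j * x k + x i * x j ^+ 2 * x k + x i * x j * x k ^+ 2).

Lemma power_sum_identities n :
  [/\ 2%:R * E2 n.+1 = Pw n.+1 1 ^+ 2 - Pw n.+1 2,
      Q2 n.+1 = Pw n.+1 1 * Pw n.+1 2 - Pw n.+1 3 &
      2%:R * T3 n.+1 = Pw n.+1 2 * Pw n.+1 1 ^+ 2 - 2%:R * Pw n.+1 3 * Pw n.+1 1
                       - Pw n.+1 2 ^+ 2 + 2%:R * Pw n.+1 4].
Proof.
elim: n => [|n [IHE IHQ IHT]].
  by rewrite /E2 /Q2 /T3 /S3R /Pw !big_geq //; split; ring.
have Pw_recr m : Pw n.+2 m = Pw n.+1 m + x n.+1 ^+ m by rewrite /Pw big_nat_recr.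
have Pw1 : Pw n.+1 1 = \sum_(1 <= i < n.+1) x i by apply: eq_bigr => i _; rewrite expr1.
have E_recr : E2 n.+2 = E2 n.+1 + Pw n.+1 1 * x n.+1.
  by rewrite /E2 sum2_recr // Pw1 mulr_suml.
have Q_recr : Q2 n.+2 = Q2 n.+1 + (Pw n.+1 2 * x n.+1 + Pw n.+1 1 * x n.+1 ^+ 2).
  by rewrite /Q2 sum2_recr // Pw1 /Pw !mulr_suml -[X in _ = _ + X]big_split.
have T_recr : T3 n.+2 = T3 n.+1 + (x n.+1 * Q2 n.+1 + x n.+1 ^+ 2 * E2 n.+1).
  rewrite /T3 S3R_recr //; congr (_ + _).
  rewrite /Q2 /E2 !mulr_sumr -big_split; apply: eq_bigr => i _.
  by rewrite !mulr_sumr -big_split; apply: eq_bigr => j _ /=; ring.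
rewrite E_recr Q_recr T_recr !Pw_recr; split.
- by rewrite mulrDr IHE; ring.
- by rewrite IHQ; ring.
- have -> : 2%:R * (T3 n.+1 + (x n.+1 * Q2 n.+1 + x n.+1 ^+ 2 * E2 n.+1)) =
     2%:R * T3 n.+1 + x n.+1 ^+ 2 * (2%:R * E2 n.+1) + 2%:R * x n.+1 * Q2 n.+1 by ring.
  by rewrite IHT IHE IHQ; ring.
Qed.

End TripleSums.

Section PowerSums.

(* In a finite field, sum_{y != 0} y^-m = 0 as soon as some a^m differs from 1:
   multiplying every y by a permutes the nonzero elements. *)
Lemma sum_inv_pow_eq0 (F : finFieldType) m (a : F) : a != 0 -> a ^+ m != 1 ->
  \sum_(y : F | y != 0) y^-1 ^+ m = 0.
Proof.
move=> a0 am; set s := \sum_(y : F | y != 0) _.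
have s_scaled : s = a^-1 ^+ m * s.
  rewrite {1}/s (reindex_inj (mulfI a0)) /s mulr_sumr; apply: eq_big => [y|y _] /=.
    by rewrite mulf_eq0 (negbTE a0).
  by rewrite invfM exprMn.
have : (1 - a^-1 ^+ m) * s = 0 by rewrite mulrBl mul1r -s_scaled subrr.
move/eqP; rewrite mulf_eq0 => /orP[|/eqP //].
by rewrite subr_eq0 eq_sym exprVn invr_eq1 (negbTE am).
Qed.

Variable p : nat.
Hypothesis p_prime : prime p.

Lemma sum_Fp_nonzero (f : 'F_p -> 'F_p) :
  \sum_(1 <= i < p) f i%:R = \sum_(y : 'F_p | y != 0) f y.
Proof.
rewrite -[in X in \sum_(1 <= i < X) _](Fp_cast p_prime).
transitivity (\sum_(0 <= i < (Zp_trunc (pdiv p)).+2 | i != 0%N) f i%:R).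
  rewrite [RHS]big_ltn_cond //= big_nat_cond [RHS]big_nat_cond.
  by apply: eq_bigl => -[|i] //=; rewrite andbT.
by rewrite big_mkord; apply: eq_big => [//|y _]; rewrite natr_Zp.
Qed.

Hypothesis p_ge7 : (7 <= p)%N.

(* For p >= 7 the power sums of the inverses of 1, ..., p-1 of exponent
   1 to 4 vanish in F_p: use a = -1 for odd m and a = 2 for m = 2, 4. *)
Lemma sum_inv_pow_Fp m : (0 < m < 5)%N -> \sum_(1 <= i < p) (i%:R : 'F_p)^-1 ^+ m = 0.
Proof.
move=> m_range; rewrite (sum_Fp_nonzero (fun y => y^-1 ^+ m)).
have natFp_neq0 n : (p %| n)%N = false -> (n%:R : 'F_p) != 0.
  by rewrite (dvdn_pcharf (pchar_Fp p_prime)) => ->.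
have p_ndvd n : (0 < n < 7)%N -> (p %| n)%N = false.
  by move=> n_range; apply/negP => /dvdn_leq; lia.
have [m_odd|m_even] := boolP (odd m).
  apply: (@sum_inv_pow_eq0 _ _ (-1)); first by rewrite oppr_eq0 oner_eq0.
  rewrite -signr_odd m_odd expr1 eq_sym -subr_eq0 opprK -mulr2n.
  exact: natFp_neq0 (p_ndvd 2%N _).
apply: (@sum_inv_pow_eq0 _ _ 2%:R); first exact: natFp_neq0 (p_ndvd 2%N _).
have : (m == 2)%N || (m == 4)%N by move: m_range m_even; case: m => [|[|[|[|[|]]]]].
case/orP => /eqP ->; rewrite -natrX.
  by rewrite -[(2 ^ 2)%N]/(3.+1) -natr1 -subr_eq0 addrK natFp_neq0 ?p_ndvd.
rewrite -[(2 ^ 4)%N]/(15.+1) -natr1 -subr_eq0 addrK natFp_neq0 //.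
by rewrite -[15%N]/(3 * 5)%N Euclid_dvdM // !p_ndvd.
Qed.

End PowerSums.
Section Reduction.
Variable p : nat.
Hypothesis p_prime : prime p.

Definition p_integral (r : rat) : bool := ~~ (p %| `|denq r|)%N.

Definition red (r : rat) : 'F_p := (numq r)%:~R / (denq r)%:~R.

Lemma intr_Fp_eq0 (z : int) : ((z%:~R : 'F_p) == 0) = (p %| `|z|)%N.
Proof.
by case: z => n; rewrite ?NegzE ?mulrNz ?oppr_eq0 /= (dvdn_pcharf (pchar_Fp p_prime)).
Qed.

Lemma ndvd_absM (m n : int) :
  ~~ (p %| `|m|)%N -> ~~ (p %| `|n|)%N -> ~~ (p %| `|(m * n)%R|)%N.
Proof. by rewrite abszM Euclid_dvdM // negb_or => -> ->. Qed.

Lemma fracD (a b c d : int) : b != 0 -> d != 0 ->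
  a%:~R / b%:~R + c%:~R / d%:~R = (a * d + c * b)%:~R / (b * d)%:~R :> rat.
Proof.
by move=> b0 d0; rewrite !rmorphD !rmorphM /=; field; rewrite !intr_eq0 b0 d0.
Qed.

Lemma fracM (a b c d : int) :
  a%:~R / b%:~R * (c%:~R / d%:~R) = (a * c)%:~R / (b * d)%:~R :> rat.
Proof. by rewrite !rmorphM /= invfM mulrACA. Qed.

Lemma p_integral_frac (a b : int) : ~~ (p %| `|b|)%N -> p_integral (a%:~R / b%:~R).
Proof.
rewrite /p_integral; case: divqP => [_|k c k0]; first by rewrite dvdn0.
by rewrite abszM; apply: contra; apply: dvdn_mull.
Qed.

Lemma p_integralE r : p_integral r -> r = (numq r)%:~R / (denq r)%:~R.
Proof. by rewrite divq_num_den. Qed.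

Lemma p_integral0 : p_integral 0.
Proof. by rewrite /p_integral dvdn1 neq_ltn prime_gt1 ?orbT. Qed.

Lemma p_integralD r s : p_integral r -> p_integral s -> p_integral (r + s).
Proof.
move=> pr ps; rewrite (p_integralE pr) (p_integralE ps) fracD ?denq_neq0 //.
exact/p_integral_frac/ndvd_absM.
Qed.

Lemma p_integralM r s : p_integral r -> p_integral s -> p_integral (r * s).
Proof.
move=> pr ps; rewrite (p_integralE pr) (p_integralE ps) fracM.
exact/p_integral_frac/ndvd_absM.
Qed.

Lemma p_integralN r : p_integral r -> p_integral (- r).
Proof. by rewrite /p_integral denqN. Qed.

(* red (a/b) = a/b in F_p, for any representation of the fraction:
   cross-multiplying numq r * b = a * denq r holds in Z, hence in F_p. *)
Lemma red_frac (a b : int) : ~~ (p %| `|b|)%N -> red (a%:~R / b%:~R) = a%:~R / b%:~R.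
Proof.
move=> pb; set r := a%:~R / b%:~R.
have b0 : b != 0 by apply: contraNneq pb => ->.
have pD : ~~ (p %| `|denq r|)%N := p_integral_frac a pb.
have cross : numq r * b = a * denq r.
  apply: (@intr_inj rat); apply/eqP; rewrite !rmorphM /= -eqr_div ?intr_eq0 ?denq_neq0 //.
  by rewrite divq_num_den.
rewrite /red; apply/eqP; rewrite eq_sym -subr_eq0.
have bF : (b%:~R : 'F_p) != 0 by rewrite intr_Fp_eq0.
have dF : ((denq r)%:~R : 'F_p) != 0 by rewrite intr_Fp_eq0.
have -> : (a%:~R : 'F_p) / b%:~R - (numq r)%:~R / (denq r)%:~R =
          ((a * denq r)%:~R - (numq r * b)%:~R) / (b%:~R * (denq r)%:~R).
  by rewrite !rmorphM /=; field; apply/andP.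
by rewrite cross subrr mul0r.
Qed.

Lemma redD r s : p_integral r -> p_integral s -> red (r + s) = red r + red s.
Proof.
move=> pr ps; have dr : ((denq r)%:~R : 'F_p) != 0 by rewrite intr_Fp_eq0.
have ds : ((denq s)%:~R : 'F_p) != 0 by rewrite intr_Fp_eq0.
rewrite {1}(p_integralE pr) {1}(p_integralE ps) fracD ?denq_neq0 // red_frac.
  by rewrite /red !rmorphD !rmorphM /=; field; apply/andP.
exact: ndvd_absM.
Qed.

Lemma redM r s : p_integral r -> p_integral s -> red (r * s) = red r * red s.
Proof.
move=> pr ps; rewrite {1}(p_integralE pr) {1}(p_integralE ps) fracM red_frac.
  by rewrite /red !rmorphM /= invfM mulrACA.
exact: ndvd_absM.
Qed.

Lemma redN r : red (- r) = - red r.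
Proof. by rewrite /red numqN denqN mulrNz mulNr. Qed.

Lemma red_natV n : ~~ (p %| n)%N -> p_integral n%:R^-1 /\ red n%:R^-1 = n%:R^-1.
Proof.
move=> pn; have -> : (n%:R^-1 : rat) = 1%:~R / n%:~R by rewrite mul1r.
by split; [exact: p_integral_frac | rewrite red_frac // mul1r].
Qed.

(* The kernel of red is p Z_(p): equal reductions mean congruence mod p. *)
Lemma cong_red a b : p_integral a -> p_integral b -> red a = red b -> ratcong p a b.
Proof.
move=> pa pb eab; have pd : p_integral (a - b) by exact/p_integralD/p_integralN.
have : red (a - b) == 0 by rewrite redD ?p_integralN // redN eab subrr.
rewrite mulf_eq0 invr_eq0 [_ == 0 in X in _ || X]intr_Fp_eq0 (negbTE pd) orbF.
rewrite intr_Fp_eq0 => /(@dvdzP p) [m em].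
exists (m%:~R / (denq (a - b))%:~R); split; first exact: p_integral_frac.
by rewrite {1}(p_integralE pd) em rmorphM /= mulrAC mulrC mulrA.
Qed.

Lemma red_sum m n (F : nat -> rat) (G : nat -> 'F_p) :
  (forall i, (m <= i < n)%N -> p_integral (F i) /\ red (F i) = G i) ->
  p_integral (\sum_(m <= i < n) F i) /\ red (\sum_(m <= i < n) F i) = \sum_(m <= i < n) G i.
Proof.
move=> FG; rewrite big_nat_cond [X in _ = X]big_nat_cond.
apply: (big_rec2 (fun a b => p_integral a /\ red a = b)).
  by split; [exact: p_integral0 | rewrite /red (numq_int 0) mul0r].
move=> i a b /andP[mi _] [pa <-]; have [pF <-] := FG i mi.
by split; [exact: p_integralD | exact: redD].
Qed.

Lemma red_S3 (f : nat -> nat -> nat -> rat) (g : nat -> nat -> nat -> 'F_p) :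
  (forall i j k, (0 < i)%N -> (i < j)%N -> (j < k)%N -> (k < p)%N ->
     p_integral (f i j k) /\ red (f i j k) = g i j k) ->
  p_integral (S3 p f) /\ red (S3 p f) = S3R p g.
Proof.
move=> fg; apply: red_sum => i /andP[i0 _]; apply: red_sum => j /andP[ij _].
by apply: red_sum => k /andP[jk kp]; apply: fg.
Qed.

End Reduction.

Definition inv_Fp (p i : nat) : 'F_p := (i%:R)^-1.

Section IdentitiesFp.
Variable p : nat.
Hypothesis p_prime : prime p.
Local Notation x := (inv_Fp p).

Lemma inv_Fp_reflect i : (i <= p)%N -> x (p - i) = - x i.
Proof. by move=> ip; rewrite /inv_Fp natrB // (pchar_Fp_0 p_prime) sub0r invrN. Qed.

Lemma S3_Fp_reflect :
  S3R p (fun i j k => x i ^+ 2 * x j * x k) = S3R p (fun i j k => x i * x j * x k ^+ 2).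
Proof.
rewrite (S3R_reflect p (fun i j k => x i ^+ 2 * x j * x k)).
by apply: eq_S3R => i j k i0 ij jk kp; rewrite !inv_Fp_reflect; try lia; ring.
Qed.

Hypothesis p_ge7 : (7 <= p)%N.

(* The three sums add up to 0, their double being a polynomial in vanishing power sums. *)
Lemma S3_Fp_total :
  S3R p (fun i j k => x i ^+ 2 * x j * x k) + S3R p (fun i j k => x i * x j ^+ 2 * x k)
  + S3R p (fun i j k => x i * x j * x k ^+ 2) = 0.
Proof.
have [_ _] := power_sum_identities x p.-1; rewrite prednK ?prime_gt0 //.
rewrite /T3 !S3R_add /Pw !sum_inv_pow_Fp // => /eqP.
rewrite !(mul0r, mulr0, subrr, expr0n) /= addr0 mulf_eq0 => /orP[|/eqP //].
by rewrite -(dvdn_pcharf (pchar_Fp p_prime)) => /dvdn_leq; lia.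
Qed.

Lemma S3_Fp_half :
  S3R p (fun i j k => x i * x j * x k ^+ 2) = - 2%:R^-1 * S3R p (fun i j k => x i * x j ^+ 2 * x k).
Proof.
have two_neq0 : (2%:R : 'F_p) != 0.
  by rewrite -(dvdn_pcharf (pchar_Fp p_prime)); apply/negP => /dvdn_leq; lia.
move: S3_Fp_total; rewrite S3_Fp_reflect; set B := S3R p _; set C := S3R p _ => total.
have -> : C = - (2%:R * B) by apply/eqP; rewrite -subr_eq0 -[X in _ == X]total; apply/eqP; ring.
by field.
Qed.

End IdentitiesFp.

Lemma red_S3_monomial p (a b c : nat) : prime p ->
  p_integral p (S3 p (fun i j k => (i%:R ^+ a * j%:R ^+ b * k%:R ^+ c)^-1)) /\
  red p (S3 p (fun i j k => (i%:R ^+ a * j%:R ^+ b * k%:R ^+ c)^-1)) =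
  S3R p (fun i j k => inv_Fp p i ^+ a * inv_Fp p j ^+ b * inv_Fp p k ^+ c).
Proof.
move=> p_prime; apply: (red_S3 p_prime) => i j k i0 ij jk kp.
have ndvd_range n : (0 < n < p)%N -> (p %| n)%N = false.
  by move=> ?; apply/negP => /dvdn_leq; lia.
have ndvd_w : ~~ (p %| i ^ a * j ^ b * k ^ c)%N.
  by rewrite !Euclid_dvdM // !Euclid_dvdX // !ndvd_range //; lia.
rewrite -!natrX -!natrM; have [pw ->] := red_natV p_prime ndvd_w.
by split => //; rewrite /inv_Fp !natrM !natrX !invfM !exprVn.
Qed.

Theorem lemma2p7 (p : nat) (hp : prime p) (h7 : (7 <= p)%N) :
  ratcong p (S3 p (fun i j k => (i%:R ^+ 2 * j%:R * k%:R)^-1))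
            (S3 p (fun i j k => (i%:R * j%:R * k%:R ^+ 2)^-1)) /\
  ratcong p (S3 p (fun i j k => (i%:R * j%:R * k%:R ^+ 2)^-1))
            (- (1 / 2%:R) * S3 p (fun i j k => (i%:R * j%:R ^+ 2 * k%:R)^-1)).
Proof.
pose x := inv_Fp p.
have [pA redA] : p_integral p (S3 p (fun i j k => (i%:R ^+ 2 * j%:R * k%:R)^-1)) /\
    red p (S3 p (fun i j k => (i%:R ^+ 2 * j%:R * k%:R)^-1)) =
    S3R p (fun i j k => x i ^+ 2 * x j * x k) := red_S3_monomial 2 1 1 hp.
have [pB redB] : p_integral p (S3 p (fun i j k => (i%:R * j%:R * k%:R ^+ 2)^-1)) /\
    red p (S3 p (fun i j k => (i%:R * j%:R * k%:R ^+ 2)^-1)) =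
    S3R p (fun i j k => x i * x j * x k ^+ 2) := red_S3_monomial 1 1 2 hp.
have [pC redC] : p_integral p (S3 p (fun i j k => (i%:R * j%:R ^+ 2 * k%:R)^-1)) /\
    red p (S3 p (fun i j k => (i%:R * j%:R ^+ 2 * k%:R)^-1)) =
    S3R p (fun i j k => x i * x j ^+ 2 * x k) := red_S3_monomial 1 2 1 hp.
have [p_half red_half] : p_integral p 2%:R^-1 /\ red p 2%:R^-1 = 2%:R^-1.
  by apply: red_natV => //; apply/negP => /dvdn_leq; lia.
split; first by apply: (cong_red hp pA pB); rewrite redA redB S3_Fp_reflect.
apply: (cong_red hp pB); first by rewrite div1r; apply/p_integralM/pC/p_integralN.
by rewrite div1r redM ?p_integralN // redN red_half redB redC S3_Fp_half.
Qed.
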